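(* Let $U\subset\mathbb{C}$ be open, let $\mu,a:U\to\mathbb{C}$ be holomorphic with $\mu\neq0$ and $|a|\neq1$ on $U$, and let $F(\theta;w)$ be the $\theta$-family of minimal surfaces defined by $a,\mu$. For $\theta\in\mathbb{R}$ and $w\in U$ set $$L_3(a)=\big(1+a\bar a,\;a+\bar a,\;-i(a-\bar a),\;-1+a\bar a\big),\qquad L_0(e^{i\theta}a)=\big(1+a\bar a,\;ae^{i\theta}+\bar ae^{-i\theta},\;-i(ae^{i\theta}-\bar ae^{-i\theta}),\;1-a\bar a\big),$$ (with $a=a(w)$), and $$\tau(\theta;a)=\frac{L_3(a)+L_0(e^{i\theta}a)}{\sqrt{-2\langle L_3(a),L_0(e^{i\theta}a)\rangle}},\qquad \nu(\theta;a)=\frac{L_3(a)-L_0(e^{i\theta}a)}{\sqrt{-2\langle L_3(a),L_0(e^{i\theta}a)\rangle}}.$$ Then $\tau(\theta;a(w))$ and $\nu(\theta;a(w))$ are the corresponding normal vectors of the surface $F(\theta;\cdot)$ at $w$ (an orthonormal basis of the normal plane, $\tau$ unit timelike, $\nu$ unit spacelike); the metric tensor of the surfaces of the family is $$\mathbf g(\theta;w)=4\mu(w)\overline{\mu(w)}\big(1-2a(w)\overline{a(w)}\cos\theta+(a(w)\overline{a(w)})^2\big)\,dw\,d\bar w;$$ and $\tau^3(\theta;w)\equiv0$ and $\nu^0(\theta;w)\equiv0$ for all $(\theta,w)\in\mathbb{R}\times U$.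
   Context: $\mathbb{R}^4_1$ has the Lorentz product $\langle x,y\rangle=-x^0y^0+x^1y^1+x^2y^2+x^3y^3$, extended complex-bilinearly to $\mathbb{C}^4$. For $a,b\in\mathbb{C}$ let $W(a,b)=(a+b,\;1+ab,\;i(1-ab),\;a-b)$. The $\theta$-family defined by holomorphic $\mu,a$ is $F(\theta;w)=P+2\operatorname{Re}\int_{w_0}^{w}\mu(\xi)W(a(\xi),e^{i\theta}a(\xi))\,d\xi$ for a fixed $P\in\mathbb{R}^4_1$ and $w_0\in U$ (assume $U$ simply connected so this is well defined); each $F(\theta;\cdot)$ is a minimal isothermal spacelike surface with $\partial_wF=\mu W(a,e^{i\theta}a)$. *)

From Stdlib Require Import Reals.
From Coquelicot Require Import Coquelicot.
Open Scope R_scope.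

(* vectors of C^4 / R^4 are represented as functions nat -> C / nat -> R;
   only the components 0,1,2,3 are relevant *)

Definition lorC (x y : nat -> C) : C :=
  (- (x 0%nat * y 0%nat) + x 1%nat * y 1%nat + x 2%nat * y 2%nat + x 3%nat * y 3%nat)%C.

Definition lorR (x y : nat -> R) : R :=
  - (x 0%nat * y 0%nat) + x 1%nat * y 1%nat + x 2%nat * y 2%nat + x 3%nat * y 3%nat.

Definition W (a b : C) : nat -> C := fun k =>
  match k with
  | 0%nat => (a + b)%C
  | 1%nat => (1 + a * b)%C
  | 2%nat => (Ci * (1 - a * b))%C
  | 3%nat => (a - b)%C
  | _ => 0%C
  end.

Definition eith (th : R) : C := (cos th, sin th).

Definition L3 (a : C) : nat -> C := fun k =>
  match k with
  | 0%nat => (1 + a * Cconj a)%C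
  | 1%nat => (a + Cconj a)%C
  | 2%nat => (- Ci * (a - Cconj a))%C
  | 3%nat => (-1 + a * Cconj a)%C
  | _ => 0%C
  end.

(* L_0(b) = (1 + b bbar, b + bbar, -i(b - bbar), 1 - b bbar); it is used with
   b = e^{i theta} a, for which b bbar = a abar *)
Definition L0 (b : C) : nat -> C := fun k =>
  match k with
  | 0%nat => (1 + b * Cconj b)%C
  | 1%nat => (b + Cconj b)%C
  | 2%nat => (- Ci * (b - Cconj b))%C
  | 3%nat => (1 - b * Cconj b)%C
  | _ => 0%C
  end.

Definition Q (th : R) (a : C) : C :=
  (- (RtoC 2) * lorC (L3 a) (L0 (eith th * a)))%C.

(* sqrt(-2 <L_3, L_0>), taken as the real square root of the real part
   (the theorem asserts the quantity is real and positive) *)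
Definition nf (th : R) (a : C) : R := sqrt (Re (Q th a)).

Definition tau (th : R) (a : C) : nat -> C := fun k =>
  ((L3 a k + L0 (eith th * a) k) / RtoC (nf th a))%C.

Definition nu (th : R) (a : C) : nat -> C := fun k =>
  ((L3 a k - L0 (eith th * a) k) / RtoC (nf th a))%C.

Definition Fx (F : C -> nat -> R) (w : C) : nat -> R :=
  fun k => Derive (fun x => F (x, Im w) k) (Re w).
Definition Fy (F : C -> nat -> R) (w : C) : nat -> R :=
  fun k => Derive (fun y => F (Re w, y) k) (Im w).

From Stdlib Require Import Reals Lra Lia.
From Coquelicot Require Import Coquelicot.
Open Scope R_scope.

(* Put b = e^{iθ} a.  W(a,b) is isotropic and Lorentz-orthogonal to both L_3(a)
   and L_0(b) (polynomial identities in a, ā, b, b̄), so the real vectors L_3(a),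
   L_0(b) are normal to F_x = 2 Re(μW) and F_y = -2 Im(μW), while isotropy of μW
   makes F conformal with factor 2|μ|²⟨W, W̄⟩.  L_3(a) and L_0(b) are null and
   ⟨L_3(a), L_0(b)⟩ = -⟨W, W̄⟩ = -2|1 - ā b|² = -2(1 - 2|a|² cos θ + |a|⁴), which
   is negative since |a| ≠ 1; normalising their sum and difference gives the unit
   timelike τ and the unit spacelike ν.  Finally τ³ = ν⁰ = 0 because |b| = |a|. *)

Definition conjv (v : nat -> C) : nat -> C := fun k => Cconj (v k).

Ltac C_componentwise :=
  repeat match goal with c : C |- _ => destruct c end;
  apply injective_projections; simpl; ring.

Lemma lorC_scaler (x v : nat -> C) (c : C) :
  lorC x (fun k => c * v k)%C = (c * lorC x v)%C.
Proof. unfold lorC; ring. Qed.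

Lemma Re_lorC_real (x v : nat -> C) : (forall k, Im (x k) = 0) ->
  lorR (fun k => Re (x k)) (fun k => Re (v k)) = Re (lorC x v).
Proof. intros Hx; unfold lorR, lorC, Re, Im in *; simpl; rewrite !Hx; ring. Qed.

Lemma Im_lorC_real (x v : nat -> C) : (forall k, Im (x k) = 0) ->
  lorR (fun k => Re (x k)) (fun k => Im (v k)) = Im (lorC x v).
Proof. intros Hx; unfold lorR, lorC, Re, Im in *; simpl; rewrite !Hx; ring. Qed.

Lemma lorR_re_im_isotropic (v : nat -> C) : lorC v v = 0%C ->
  (2 * RtoC (lorR (fun k => Re (v k)) (fun k => Re (v k))) = lorC v (conjv v))%C /\
  (2 * RtoC (lorR (fun k => Im (v k)) (fun k => Im (v k))) = lorC v (conjv v))%C /\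
  lorR (fun k => Re (v k)) (fun k => Im (v k)) = 0.
Proof.
  intros Hv.
  assert (HRe := f_equal Re Hv); assert (HIm := f_equal Im Hv).
  unfold lorC, lorR, conjv, Re, Im in *; simpl in *.
  split; [|split]; try (apply injective_projections; simpl); nra.
Qed.

Lemma RtoC_Re_real (z : C) : Im z = 0 -> RtoC (Re z) = z.
Proof. destruct z as [x y]; simpl; intros ->; reflexivity. Qed.

Lemma Im_div_RtoC (z : C) (r : R) : Im z = 0 -> Im (z / RtoC r)%C = 0.
Proof. destruct z as [x y]; simpl; intros ->; unfold Rdiv; ring. Qed.

Section ComplexLorentz.
Local Open Scope C_scope.

Lemma lorC_null_pair_frame (x y : nat -> C) (c : C) :
  lorC x x = 0 -> lorC y y = 0 -> c <> 0 -> c * c = -2 * lorC x y ->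
  lorC (fun k => (x k + y k) / c) (fun k => (x k + y k) / c) = -1 /\
  lorC (fun k => (x k - y k) / c) (fun k => (x k - y k) / c) = 1 /\
  lorC (fun k => (x k + y k) / c) (fun k => (x k - y k) / c) = 0.
Proof.
  intros Hx Hy Hc Hxy.
  assert (Exy : lorC x y = - (c * c) / 2) by (rewrite Hxy; field).
  assert (Epp : lorC (fun k => (x k + y k) / c) (fun k => (x k + y k) / c)
                = (lorC x x + 2 * lorC x y + lorC y y) / (c * c))
    by (unfold lorC; field; exact Hc).
  assert (Emm : lorC (fun k => (x k - y k) / c) (fun k => (x k - y k) / c)
                = (lorC x x - 2 * lorC x y + lorC y y) / (c * c))
    by (unfold lorC; field; exact Hc).
  assert (Epm : lorC (fun k => (x k + y k) / c) (fun k => (x k - y k) / c)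
                = (lorC x x - lorC y y) / (c * c))
    by (unfold lorC; field; exact Hc).
  rewrite Epp, Emm, Epm, Hx, Hy, Exy.
  repeat split; field; exact Hc.
Qed.

Lemma lorC_W_W (a b : C) : lorC (W a b) (W a b) = 0.
Proof. unfold lorC, W; C_componentwise. Qed.

Lemma lorC_L3_W (a b : C) : lorC (L3 a) (W a b) = 0.
Proof. unfold lorC, L3, W; C_componentwise. Qed.

Lemma lorC_L0_W (a b : C) : lorC (L0 b) (W a b) = 0.
Proof. unfold lorC, L0, W; C_componentwise. Qed.

Lemma lorC_L3_L3 (a : C) : lorC (L3 a) (L3 a) = 0.
Proof. unfold lorC, L3; C_componentwise. Qed.

Lemma lorC_L0_L0 (b : C) : lorC (L0 b) (L0 b) = 0.
Proof. unfold lorC, L0; C_componentwise. Qed.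

Lemma lorC_W_conjW (a b : C) :
  lorC (W a b) (conjv (W a b))
  = 2 * ((1 - Cconj a * b) * Cconj (1 - Cconj a * b)).
Proof. unfold lorC, W, conjv; C_componentwise. Qed.

Lemma lorC_L3_L0 (a b : C) :
  lorC (L3 a) (L0 b) = - lorC (W a b) (conjv (W a b)).
Proof. unfold lorC, L3, L0, W, conjv; C_componentwise. Qed.

End ComplexLorentz.

Lemma Im_L3 (a : C) (k : nat) : Im (L3 a k) = 0.
Proof. destruct a; destruct k as [|[|[|[|k]]]]; simpl; ring. Qed.

Lemma Im_L0 (b : C) (k : nat) : Im (L0 b k) = 0.
Proof. destruct b; destruct k as [|[|[|[|k]]]]; simpl; ring. Qed.

Definition metric_factor (th : R) (a : C) : R :=
  1 - 2 * Cmod a ^ 2 * cos th + Cmod a ^ 2 * Cmod a ^ 2.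

Lemma metric_factor_pos (th : R) (a : C) : Cmod a <> 1 -> 0 < metric_factor th a.
Proof.
  intros Ha; unfold metric_factor.
  assert (Hr := Cmod_ge_0 a); assert (Hc := COS_bound th).
  assert (Hsq : Cmod a ^ 2 - 1 <> 0).
  { intros H; apply Ha.
    assert (Cmod a * Cmod a = 1) by lra.
    nra. }
  assert (0 < (Cmod a ^ 2 - 1) * (Cmod a ^ 2 - 1)) by (apply Rsqr_pos_lt; exact Hsq).
  (* metric_factor >= (|a|² - 1)² since cos th <= 1 *)
  nra.
Qed.

Section Rotation.
Local Open Scope C_scope.

Lemma eith_mul_conj (th : R) : eith th * Cconj (eith th) = 1.
Proof.
  pose proof (sin2_cos2 th) as H; unfold Rsqr in H.
  unfold eith; apply injective_projections; simpl; lra.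
Qed.

Lemma eith_add_conj (th : R) : eith th + Cconj (eith th) = 2 * cos th.
Proof. unfold eith; apply injective_projections; simpl; ring. Qed.

Lemma metric_factor_C (th : R) (a : C) :
  1 - 2 * a * Cconj a * cos th + a * Cconj a * (a * Cconj a) = RtoC (metric_factor th a).
Proof.
  assert (E : forall r c : R, RtoC (1 - 2 * r * c + r * r)%R = 1 - 2 * r * c + r * r)
    by (intros; apply injective_projections; simpl; ring).
  unfold metric_factor; rewrite E, Cmod2_conj; ring.
Qed.

Lemma one_sub_conj_rotation (th : R) (a : C) :
  (1 - Cconj a * (eith th * a)) * Cconj (1 - Cconj a * (eith th * a))
  = RtoC (metric_factor th a).
Proof.
  rewrite <- metric_factor_C.
  transitivity (1 - a * Cconj a * (eith th + Cconj (eith th))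
                + a * Cconj a * (a * Cconj a) * (eith th * Cconj (eith th))).
  - unfold eith; destruct a; apply injective_projections; simpl; ring.
  - rewrite eith_mul_conj, eith_add_conj; ring.
Qed.

Lemma Q_rotation (th : R) (a : C) : Q th a = RtoC (4 * metric_factor th a).
Proof.
  unfold Q; rewrite lorC_L3_L0, lorC_W_conjW, one_sub_conj_rotation, RtoC_mult; ring.
Qed.

Lemma lorC_W_conjW_rotation (th : R) (a : C) :
  lorC (W a (eith th * a)) (conjv (W a (eith th * a)))
  = 2 * (1 - 2 * a * Cconj a * cos th + a * Cconj a * (a * Cconj a)).
Proof. rewrite lorC_W_conjW, one_sub_conj_rotation, metric_factor_C; reflexivity. Qed.

End Rotation.

Lemma Q_real_pos (th : R) (a : C) : Cmod a <> 1 -> Im (Q th a) = 0 /\ 0 < Re (Q th a).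
Proof.
  intros Ha; rewrite Q_rotation; simpl.
  split; [reflexivity | assert (H := metric_factor_pos th a Ha); lra].
Qed.

Section NormalFrame.
Variables (th : R) (a : C).

Lemma nf_pos : Cmod a <> 1 -> 0 < nf th a.
Proof. intros Ha; apply sqrt_lt_R0, (Q_real_pos th a Ha). Qed.

Lemma tau_real (k : nat) : Im (tau th a k) = 0.
Proof. apply Im_div_RtoC; rewrite im_plus, Im_L3, Im_L0; ring. Qed.

Lemma nu_real (k : nat) : Im (nu th a k) = 0.
Proof. apply Im_div_RtoC; simpl; rewrite Im_L3, Im_L0; ring. Qed.

Lemma tau_nu_normal :
  lorC (tau th a) (W a (eith th * a)) = 0%C /\ lorC (nu th a) (W a (eith th * a)) = 0%C.
Proof.
  set (w := W a (eith th * a)).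
  assert (Et : lorC (tau th a) w
               = ((lorC (L3 a) w + lorC (L0 (eith th * a)) w) / RtoC (nf th a))%C)
    by (unfold lorC, tau, Cdiv; ring).
  assert (En : lorC (nu th a) w
               = ((lorC (L3 a) w - lorC (L0 (eith th * a)) w) / RtoC (nf th a))%C)
    by (unfold lorC, nu, Cdiv; ring).
  rewrite Et, En; unfold w; rewrite lorC_L3_W, lorC_L0_W; split; unfold Cdiv; ring.
Qed.

Lemma tau_nu_orthonormal : Cmod a <> 1 ->
  lorC (tau th a) (tau th a) = (-1)%C /\ lorC (nu th a) (nu th a) = 1%C /\
  lorC (tau th a) (nu th a) = 0%C.
Proof.
  intros Ha; apply lorC_null_pair_frame.
  - apply lorC_L3_L3.
  - apply lorC_L0_L0.
  - intros H; apply (f_equal Re) in H; simpl in H.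
    pose proof (nf_pos Ha); lra.
  - destruct (Q_real_pos th a Ha) as [HIm HRe].
    rewrite <- RtoC_mult; unfold nf; rewrite sqrt_sqrt by lra.
    rewrite RtoC_Re_real by exact HIm; unfold Q; ring.
Qed.

Lemma tau3_nu0 : tau th a 3%nat = 0%C /\ nu th a 0%nat = 0%C.
Proof.
  assert (Hb : ((eith th * a) * Cconj (eith th * a) = a * Cconj a)%C).
  { rewrite Cmult_conj.
    transitivity (eith th * Cconj (eith th) * (a * Cconj a))%C; [ring|].
    rewrite eith_mul_conj; ring. }
  unfold tau, nu, L3, L0; cbv beta iota; rewrite Hb; split; unfold Cdiv; ring.
Qed.

End NormalFrame.

Section TangentPlane.
Variables (mu : C) (w : nat -> C) (X Y : nat -> R).
Hypothesis HX : forall k, (k <= 3)%nat -> X k = 2 * Re (mu * w k).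
Hypothesis HY : forall k, (k <= 3)%nat -> Y k = - 2 * Im (mu * w k).

Lemma tangent_normal (x : nat -> C) : (forall k, Im (x k) = 0) -> lorC x w = 0%C ->
  lorR (fun k => Re (x k)) X = 0 /\ lorR (fun k => Re (x k)) Y = 0.
Proof.
  intros Hx Hxw.
  assert (EX : lorR (fun k => Re (x k)) X
               = 2 * lorR (fun k => Re (x k)) (fun k => Re (mu * w k)))
    by (unfold lorR; rewrite !HX by lia; ring).
  assert (EY : lorR (fun k => Re (x k)) Y
               = - 2 * lorR (fun k => Re (x k)) (fun k => Im (mu * w k)))
    by (unfold lorR; rewrite !HY by lia; ring).
  rewrite EX, EY, Re_lorC_real, Im_lorC_real, lorC_scaler, Hxw, Cmult_0_r by exact Hx.
  simpl; split; ring.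
Qed.

Lemma tangent_conformal : lorC w w = 0%C ->
  RtoC (lorR X X) = (2 * (mu * Cconj mu * lorC w (conjv w)))%C /\
  RtoC (lorR Y Y) = (2 * (mu * Cconj mu * lorC w (conjv w)))%C /\
  lorR X Y = 0.
Proof.
  intros Hw.
  assert (HV : lorC (fun k => mu * w k)%C (fun k => mu * w k)%C = 0%C).
  { transitivity (mu * mu * lorC w w)%C; [unfold lorC; ring | rewrite Hw; ring]. }
  assert (HVc : lorC (fun k => mu * w k)%C (conjv (fun k => mu * w k)%C)
                = (mu * Cconj mu * lorC w (conjv w))%C)
    by (unfold lorC, conjv; rewrite !Cmult_conj; ring).
  destruct (lorR_re_im_isotropic _ HV) as (HRe & HIm & HReIm).
  rewrite HVc in HRe, HIm.
  assert (EXX : lorR X X = 4 * lorR (fun k => Re (mu * w k)) (fun k => Re (mu * w k)))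
    by (unfold lorR; rewrite !HX by lia; ring).
  assert (EYY : lorR Y Y = 4 * lorR (fun k => Im (mu * w k)) (fun k => Im (mu * w k)))
    by (unfold lorR; rewrite !HY by lia; ring).
  assert (EXY : lorR X Y = - 4 * lorR (fun k => Re (mu * w k)) (fun k => Im (mu * w k)))
    by (unfold lorR; rewrite !HX, !HY by lia; ring).
  split; [|split].
  - rewrite EXX, RtoC_mult, <- HRe; ring.
  - rewrite EYY, RtoC_mult, <- HIm; ring.
  - rewrite EXY, HReIm; ring.
Qed.

End TangentPlane.

Theorem mainTheorem7 :
  forall (U : C -> Prop) (mu a : C -> C) (F : R -> C -> nat -> R),
    open U ->
    (forall z, U z -> ex_derive (K := C_AbsRing) (V := C_NormedModule) mu z) ->
    (forall z, U z -> ex_derive (K := C_AbsRing) (V := C_NormedModule) a z) ->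
    (forall z, U z -> mu z <> 0%C) ->
    (forall z, U z -> Cmod (a z) <> 1) ->
    (* F(theta; .) is the theta-family: real-valued with
       d_w F = mu W(a, e^{i theta} a), i.e. F_x = 2 Re(mu W), F_y = -2 Im(mu W) *)
    (forall (th : R) (z : C), U z -> forall k : nat, (k <= 3)%nat ->
       is_derive (fun x => F th (x, Im z) k) (Re z)
                 (2 * Re (mu z * W (a z) (eith th * a z) k)) /\
       is_derive (fun y => F th (Re z, y) k) (Im z)
                 (- 2 * Im (mu z * W (a z) (eith th * a z) k))) ->
    forall (th : R) (z : C), U z ->
      let t := tau th (a z) in
      let n := nu th (a z) in
      let tR := fun k => Re (t k) in
      let nR := fun k => Re (n k) in
      let X := Fx (F th) z in
      let Y := Fy (F th) z in
      (* -2 <L_3, L_0> is a positive real, so the square root is meaningful *)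
      (Im (Q th (a z)) = 0 /\ 0 < Re (Q th (a z))) /\
      (* tau, nu are real vectors *)
      (forall k : nat, (k <= 3)%nat -> Im (t k) = 0 /\ Im (n k) = 0) /\
      (* they are normal to the surface F(theta; .) at z *)
      (lorR tR X = 0 /\ lorR tR Y = 0 /\ lorR nR X = 0 /\ lorR nR Y = 0) /\
      (* orthonormal: tau unit timelike, nu unit spacelike *)
      (lorR tR tR = -1 /\ lorR nR nR = 1 /\ lorR tR nR = 0) /\
      (* metric tensor g = lambda dw dwbar with
         lambda = 4 mu mubar (1 - 2 a abar cos theta + (a abar)^2) *)
      (RtoC (lorR X X) =
         (4 * mu z * Cconj (mu z) *
          (1 - 2 * a z * Cconj (a z) * RtoC (cos th)
             + (a z * Cconj (a z)) * (a z * Cconj (a z))))%C /\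
       RtoC (lorR Y Y) =
         (4 * mu z * Cconj (mu z) *
          (1 - 2 * a z * Cconj (a z) * RtoC (cos th)
             + (a z * Cconj (a z)) * (a z * Cconj (a z))))%C /\
       lorR X Y = 0) /\
      (* tau^3 = 0 and nu^0 = 0 *)
      (t 3%nat = 0%C /\ n 0%nat = 0%C).
Proof.
  intros U mu a F _ _ _ _ Ha1 HF th z Hz; cbv zeta.
  pose proof (Ha1 z Hz) as Ha.
  assert (HX : forall k, (k <= 3)%nat ->
            Fx (F th) z k = 2 * Re (mu z * W (a z) (eith th * a z) k))
    by (intros k Hk; apply is_derive_unique, (HF th z Hz k Hk)).
  assert (HY : forall k, (k <= 3)%nat ->
            Fy (F th) z k = - 2 * Im (mu z * W (a z) (eith th * a z) k))
    by (intros k Hk; apply is_derive_unique, (HF th z Hz k Hk)).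
  destruct (tau_nu_normal th (a z)) as [Htau_W Hnu_W].
  destruct (tangent_normal _ _ _ _ HX HY _ (tau_real th (a z)) Htau_W) as [HtX HtY].
  destruct (tangent_normal _ _ _ _ HX HY _ (nu_real th (a z)) Hnu_W) as [HnX HnY].
  destruct (tau_nu_orthonormal th (a z) Ha) as (Htt & Hnn & Htn).
  destruct (tangent_conformal _ _ _ _ HX HY (lorC_W_W _ _)) as (HXX & HYY & HXY).
  rewrite lorC_W_conjW_rotation in HXX, HYY.
  split; [exact (Q_real_pos th (a z) Ha)|].
  split; [intros k _; exact (conj (tau_real th (a z) k) (nu_real th (a z) k))|].
  split; [tauto|].
  split.
  { rewrite !Re_lorC_real by first [apply tau_real | apply nu_real].
    rewrite Htt, Hnn, Htn; simpl; repeat split; lra. }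
  split; [rewrite HXX, HYY; repeat split; [ring | ring | exact HXY]|].
  exact (tau3_nu0 th (a z)).
Qed.
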